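(* Let $\varphi : X \to X$ be a morphism in $\mathscr{C}$ and let $\lambda : X \to L$ be a cokernel of $\varphi$. Then $\varphi$ has a dual core inverse if and only if $\varphi$ has a kernel $\kappa : K \to X$ such that both $\kappa\lambda : K \to L$ and $\varphi^{3}\varphi^{*}+\lambda\lambda^{*} : X \to X$ are invertible. In this case, $$\varphi_{\mathrm{core}}=\varphi^{*}(\varphi^{3}\varphi^{*}+\lambda\lambda^{*})^{-1}\varphi^{2}.$$
   Context: $\mathscr{C}$ is an additive category with an involution $*$: a map on morphisms sending $\varphi : X\to Y$ to $\varphi^* : Y \to X$ such that $(\varphi^* )^*=\varphi$, $(\varphi\psi)^*=\psi^*\varphi^*$ and $(\varphi+\phi)^*=\varphi^*+\phi^*$. Composition is written left to right: for $\varphi : X\to Y$ and $\psi : Y\to Z$, $\varphi\psi : X \to Z$ means ''first $\varphi$, then $\psi$''. A kernel of $\varphi : X\to Y$ is a morphism $\kappa : K\to X$ with $\kappa\varphi=0$ such that every $\alpha : M\to X$ with $\alpha\varphi=0$ factors uniquely as $\alpha=\alpha'\kappa$. A cokernel of $\varphi$ is a morphism $\lambda : Y\to L$ with $\varphi\lambda=0$ such that every $\beta : Y\to M$ with $\varphi\beta=0$ factors uniquely as $\beta=\lambda\beta'$. A morphism is invertible if it has a two-sided inverse. For $\varphi : X\to X$, a dual core inverse of $\varphi$ is a morphism $\chi : X\to X$ with $(\chi\varphi)^*=\chi\varphi$, $\chi^2\varphi=\chi$ and $\varphi^2\chi=\varphi$. It is unique when it exists and is denoted $\varphi_{\mathrm{core}}$.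 *)

From HB Require Import structures.
From mathcomp Require Import all_boot all_order all_algebra.
Set Implicit Arguments. Unset Strict Implicit. Unset Printing Implicit Defensive.
Import GRing.Theory.
Local Open Scope ring_scope.

(* An additive category with involution.  Composition is written
   left-to-right: [mcomp f g] means "first f, then g". *)
Record invAddCat := InvAddCat {
  Ob : Type;
  Mor : Ob -> Ob -> zmodType;
  mcomp : forall X Y Z : Ob, Mor X Y -> Mor Y Z -> Mor X Z;
  idm : forall X : Ob, Mor X X;
  compA : forall (X Y Z W : Ob) (f : Mor X Y) (g : Mor Y Z) (h : Mor Z W),
      mcomp (mcomp f g) h = mcomp f (mcomp g h);
  comp1m : forall (X Y : Ob) (f : Mor X Y), mcomp (idm X) f = f;
  compm1 : forall (X Y : Ob) (f : Mor X Y), mcomp f (idm Y) = f;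
  compDl : forall (X Y Z : Ob) (f f' : Mor X Y) (g : Mor Y Z),
      mcomp (f + f') g = mcomp f g + mcomp f' g;
  compDr : forall (X Y Z : Ob) (f : Mor X Y) (g g' : Mor Y Z),
      mcomp f (g + g') = mcomp f g + mcomp f g';
  zero_ob : exists Z : Ob, idm Z = 0;
  biprod : forall X Y : Ob, exists (S : Ob) (i1 : Mor X S) (i2 : Mor Y S)
      (p1 : Mor S X) (p2 : Mor S Y),
      [/\ mcomp i1 p1 = idm X, mcomp i2 p2 = idm Y, mcomp i1 p2 = 0,
          mcomp i2 p1 = 0 & mcomp p1 i1 + mcomp p2 i2 = idm S];
  star : forall X Y : Ob, Mor X Y -> Mor Y X;
  starK : forall (X Y : Ob) (f : Mor X Y), star (star f) = f;
  starM : forall (X Y Z : Ob) (f : Mor X Y) (g : Mor Y Z),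
      star (mcomp f g) = mcomp (star g) (star f);
  starD : forall (X Y : Ob) (f g : Mor X Y), star (f + g) = star f + star g
}.

Arguments mcomp {i X Y Z}.
Arguments idm {i}.
Arguments Mor : clear implicits.
Arguments Ob : clear implicits.
Arguments star {i X Y}.

Section Defs.
Variable C : invAddCat.

Definition is_kernel (K X Y : Ob C) (phi : Mor C X Y) (kappa : Mor C K X) :=
  mcomp kappa phi = 0 /\
  forall (M : Ob C) (alpha : Mor C M X), mcomp alpha phi = 0 ->
    exists! alpha' : Mor C M K, mcomp alpha' kappa = alpha.

Definition is_cokernel (X Y L : Ob C) (phi : Mor C X Y) (lambda : Mor C Y L) :=
  mcomp phi lambda = 0 /\
  forall (M : Ob C) (beta : Mor C Y M), mcomp phi beta = 0 ->
    exists! beta' : Mor C L M, mcomp lambda beta' = beta.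

Definition is_inverse (X Y : Ob C) (f : Mor C X Y) (g : Mor C Y X) :=
  mcomp f g = idm X /\ mcomp g f = idm Y.

Definition invertible (X Y : Ob C) (f : Mor C X Y) :=
  exists g : Mor C Y X, is_inverse f g.

Definition is_dual_core_inverse (X : Ob C) (phi chi : Mor C X X) :=
  [/\ star (mcomp chi phi) = mcomp chi phi,
      mcomp (mcomp chi chi) phi = chi &
      mcomp (mcomp phi phi) chi = phi].

End Defs.

(* Forward: [1 - chi phi] is killed by [phi] on the left, so it factors as
   [lambda b] with [b lambda = 1]; then [s := b (1 - phi chi)] is a kernel of
   [phi] with [s lambda = 1] and [lambda s = 1 - phi chi], and
   [chi^* chi^3 + s^* s] inverts [u := phi^3 phi^* + lambda lambda^*].
   Backward: for inverses [t] of [kappa lambda] and [v] of [u], the idempotent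
   [p := lambda t kappa] is killed by [phi] on both sides, [u v = 1] gives
   [phi (phi^2 phi^* v) = 1 - p], and [phi^2 phi^* v phi - (1 - p)] vanishes
   because it is killed on the left by [phi] (so factors through [lambda]) and
   by [p] (which fixes [lambda]); this makes [phi^* v phi^2] a dual core
   inverse.
   The formula follows from [u chi^* chi = phi^2] and [chi = phi^* chi^* chi]. *)

From Pilot Require Import Defs.
From mathcomp Require Import all_boot all_order all_algebra.
Import GRing.Theory.
Set Implicit Arguments. Unset Strict Implicit. Unset Printing Implicit Defensive.
Local Open Scope ring_scope.

Local Notation "f ;; g" := (mcomp f g) (at level 40, left associativity).
Local Notation mcompA := Defs.compA.

Section InvAddCatTheory.
Variable C : invAddCat.
Implicit Types X Y Z K L M : Ob C.

Lemma comp0m X Y Z (g : Mor C Y Z) : (0 : Mor C X Y) ;; g = 0.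
Proof. by apply: (addrI ((0 : Mor C X Y) ;; g)); rewrite -compDl !addr0. Qed.

Lemma compm0 X Y Z (f : Mor C X Y) : f ;; (0 : Mor C Y Z) = 0.
Proof. by apply: (addrI (f ;; (0 : Mor C Y Z))); rewrite -compDr !addr0. Qed.

Arguments comp0m {X Y Z}.
Arguments compm0 {X Y Z}.

Lemma compBm X Y Z (f f' : Mor C X Y) (g : Mor C Y Z) :
  (f - f') ;; g = f ;; g - f' ;; g.
Proof.
apply: (addrI (f' ;; g)); rewrite -compDl addrC subrK.
by rewrite addrC subrK.
Qed.

Lemma compmB X Y Z (f : Mor C X Y) (g g' : Mor C Y Z) :
  f ;; (g - g') = f ;; g - f ;; g'.
Proof.
apply: (addrI (f ;; g')); rewrite -compDr addrC subrK.
by rewrite addrC subrK.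
Qed.

Lemma star0 X Y : star (0 : Mor C X Y) = 0.
Proof. by apply: (addrI (star (0 : Mor C X Y))); rewrite -starD !addr0. Qed.

Lemma star1 X : star (idm X) = idm X.
Proof. by have := starM (star (idm X)) (idm X); rewrite compm1 !starK compm1. Qed.

Lemma split_mono_kernel X Y K (a : Mor C X Y) (s : Mor C K X) (r : Mor C X K)
    (y : Mor C Y X) :
  s ;; r = idm K -> s ;; a = 0 -> r ;; s + a ;; y = idm X -> is_kernel a s.
Proof.
move=> sr sa rsay; split=> // M al ala; exists (al ;; r); split.
  rewrite mcompA -[RHS]compm1 -rsay compDr -[al ;; (a ;; y)]mcompA ala.
  by rewrite comp0m addr0.
by move=> al' <-; rewrite mcompA sr compm1.
Qed.

Lemma cokernel_epi0 X Y L M (a : Mor C X Y) (l : Mor C Y L) (g : Mor C L M) :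
  is_cokernel a l -> l ;; g = 0 -> g = 0.
Proof.
move=> [_ univ] lg; have [b [_ uniq_b]] := univ M 0 (compm0 a).
by rewrite -(uniq_b g lg) -(uniq_b 0 (compm0 l)).
Qed.

Lemma cokernel_epi X Y L M (a : Mor C X Y) (l : Mor C Y L) (g g' : Mor C L M) :
  is_cokernel a l -> l ;; g = l ;; g' -> g = g'.
Proof.
move=> coker lg; apply/eqP; rewrite -subr_eq0; apply/eqP.
by apply: (cokernel_epi0 coker); rewrite compmB lg subrr.
Qed.

Lemma cokernel_eq0 X Y L M (a : Mor C X Y) (l : Mor C Y L) (p : Mor C Y Y)
    (d : Mor C Y M) :
  is_cokernel a l -> p ;; l = l -> a ;; d = 0 -> p ;; d = 0 -> d = 0.
Proof.
move=> [_ univ] pl ad pd; have [s [ls _]] := univ M d ad.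
by rewrite -ls -pl mcompA ls pd.
Qed.

Lemma star_comp_fixed X Y (b : Mor C X Y) (a : Mor C Y X) :
  b ;; a ;; star a = star a -> star (b ;; a) = b ;; a.
Proof.
move=> baa; have a_ba : a ;; star (b ;; a) = a.
  by move: (congr1 star baa); rewrite starM starK.
have ba_ba : b ;; a ;; star (b ;; a) = b ;; a by rewrite mcompA a_ba.
by rewrite -{1}ba_ba starM starK ba_ba.
Qed.

Definition gram X L (a : Mor C X X) (l : Mor C X L) :=
  a ;; a ;; a ;; star a + l ;; star l.

Section DualCoreInverse.
Variables (X : Ob C) (a x : Mor C X X).
Hypothesis dci : is_dual_core_inverse a x.

Lemma dci_xxa : x ;; x ;; a = x. Proof. by case: dci. Qed.

Lemma dci_aax : a ;; a ;; x = a. Proof. by case: dci. Qed.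

Lemma dci_starM : star a ;; star x = x ;; a.
Proof. by rewrite -starM; case: dci. Qed.

Lemma dci_xax : x ;; a ;; x = x.
Proof.
rewrite -{1}dci_xxa !mcompA -[a ;; (a ;; x)]mcompA dci_aax.
by rewrite -mcompA dci_xxa.
Qed.

Lemma dci_axa : a ;; x ;; a = a.
Proof.
rewrite -{1}dci_aax !mcompA -[x ;; (x ;; a)]mcompA dci_xxa.
by rewrite -mcompA dci_aax.
Qed.

Lemma dci_aaax : a ;; a ;; a ;; x = a ;; a.
Proof. by rewrite [a ;; a ;; a]mcompA mcompA dci_aax. Qed.

Lemma dci_xxxa : x ;; x ;; x ;; a = x ;; x.
Proof. by rewrite [x ;; x ;; x]mcompA mcompA dci_xxa. Qed.

Lemma dci_annihilator Y (l : Mor C X Y) : a ;; l = 0 -> x ;; l = 0.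
Proof. by move=> al; rewrite -dci_xxa mcompA al compm0. Qed.

Variables (L : Ob C) (l : Mor C X L).

Lemma dci_cokernel_section : is_cokernel a l ->
  exists s : Mor C L X, [/\ s ;; l = idm L, s ;; a = 0 & l ;; s + a ;; x = idm X].
Proof.
move=> coker; have [al0 univ] := coker.
have a_f : a ;; (idm X - x ;; a) = 0 by rewrite compmB compm1 -mcompA dci_axa subrr.
have [b [lb _]] := univ X _ a_f.
have f_l : (idm X - x ;; a) ;; l = l.
  by rewrite compBm comp1m mcompA al0 compm0 subr0.
have bl : b ;; l = idm L.
  by apply: (cokernel_epi coker); rewrite -mcompA lb f_l compm1.
have f_e : (idm X - x ;; a) ;; (idm X - a ;; x) = idm X - a ;; x.
  rewrite compBm comp1m compmB compm1 -[x ;; a ;; (a ;; x)]mcompA.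
  by rewrite [x ;; a ;; a]mcompA [x ;; (a ;; a) ;; x]mcompA dci_aax subrr subr0.
exists (b ;; (idm X - a ;; x)); split.
- by rewrite mcompA compBm comp1m mcompA (dci_annihilator al0) compm0 subr0.
- by rewrite mcompA compBm comp1m dci_axa subrr compm0.
- by rewrite -mcompA lb f_e subrK.
Qed.

Hypothesis al0 : a ;; l = 0.

Lemma dci_gram_star_x_x : gram a l ;; (star x ;; x) = a ;; a.
Proof.
rewrite /gram compDl [l ;; star l ;; _]mcompA -[star l ;; _]mcompA -starM.
rewrite (dci_annihilator al0) star0 comp0m compm0 addr0.
by rewrite -mcompA [_ ;; star x]mcompA dci_starM -mcompA !dci_aaax.
Qed.

Lemma dci_gram_formula v : v ;; gram a l = idm X -> x = star a ;; v ;; a ;; a.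
Proof.
move=> vu; rewrite mcompA -dci_gram_star_x_x -mcompA [star a ;; v ;; _]mcompA vu.
by rewrite compm1 -mcompA dci_starM dci_xax.
Qed.

Lemma dci_gram_inverse (s : Mor C L X) :
  s ;; l = idm L -> s ;; a = 0 -> l ;; s + a ;; x = idm X ->
  is_inverse (gram a l) (star x ;; x ;; x ;; x + star s ;; s).
Proof.
move=> sl sa lsax; have xl0 := dci_annihilator al0.
have a3_x3 : a ;; a ;; a ;; star a ;; (star x ;; x ;; x ;; x) = a ;; x.
  by rewrite -!mcompA [_ ;; star x]mcompA dci_starM -mcompA !dci_aaax dci_aax.
have x3_a3 : star x ;; x ;; x ;; x ;; (a ;; a ;; a ;; star a) = star (a ;; x).
  rewrite (_ : _ ;; (a ;; a ;; a ;; star a) =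
               star x ;; (x ;; x ;; x ;; a ;; a ;; a) ;; star a); last first.
    by rewrite !mcompA.
  rewrite dci_xxxa dci_xxa -dci_starM -mcompA -starM mcompA -!starM.
  by rewrite -mcompA dci_axa.
split.
- rewrite /gram compDl !compDr a3_x3.
  rewrite -[_ ;; (star s ;; s)]mcompA [_ ;; star s]mcompA -starM sa star0.
  rewrite compm0 comp0m addr0.
  rewrite -!mcompA [l ;; star l ;; star x]mcompA -starM xl0 star0 compm0 !comp0m.
  by rewrite add0r [l ;; star l ;; star s]mcompA -starM sl star1 compm1 addrC.
- rewrite /gram !compDl !compDr x3_a3.
  rewrite -!mcompA [_ ;; x ;; l]mcompA xl0 compm0 comp0m addr0.
  rewrite [star s ;; s ;; a]mcompA sa compm0 !comp0m add0r.
  by rewrite [star s ;; s ;; l]mcompA sl compm1 -starM -starD addrC lsax star1.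
Qed.

End DualCoreInverse.

Section GramInverse.
Variables (X L K : Ob C) (a : Mor C X X) (l : Mor C X L) (k : Mor C K X).
Variables (t : Mor C L K) (v : Mor C X X).
Hypotheses (coker : is_cokernel a l) (ka : k ;; a = 0) (tkl : t ;; (k ;; l) = idm L).
Hypotheses (uv : gram a l ;; v = idm X) (vu : v ;; gram a l = idm X).

Let p := l ;; t ;; k.

Lemma proj_a : p ;; a = 0.
Proof. by rewrite /p mcompA ka compm0. Qed.

Lemma a_proj : a ;; p = 0.
Proof. by rewrite /p -!mcompA coker.1 !comp0m. Qed.

Lemma proj_l : p ;; l = l.
Proof. by rewrite /p !mcompA tkl compm1. Qed.

Lemma proj_idem : p ;; p = p.
Proof. by rewrite {2}/p -!mcompA proj_l. Qed.

Lemma l_star_l_v : l ;; star l ;; v = p.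
Proof.
have pu : p ;; gram a l = l ;; star l.
  by rewrite /gram compDr -!mcompA proj_a !comp0m add0r proj_l.
by rewrite -pu mcompA uv compm1.
Qed.

Lemma v_l_star_l : v ;; (l ;; star l) = star p.
Proof.
have up : gram a l ;; star p = l ;; star l.
  rewrite /gram compDl [_ ;; star a ;; star p]mcompA -starM proj_a star0.
  by rewrite compm0 add0r mcompA -starM proj_l.
by rewrite -up -mcompA vu comp1m.
Qed.

Lemma star_a_v_a3_star_a : star a ;; v ;; a ;; a ;; a ;; star a = star a.
Proof.
transitivity (star a ;; (v ;; gram a l)); last by rewrite vu compm1.
rewrite /gram !compDr v_l_star_l -starM proj_a star0 addr0.
by rewrite !mcompA.
Qed.

Lemma a2_star_a_v_a : a ;; a ;; star a ;; v ;; a = idm X - p.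
Proof.
have ay : a ;; (a ;; a ;; star a ;; v) = idm X - p.
  by rewrite -uv -l_star_l_v /gram compDl !mcompA addrK.
apply/eqP; rewrite -subr_eq0; apply/eqP; apply: (cokernel_eq0 coker proj_l).
- rewrite compmB -mcompA ay compBm comp1m proj_a compmB compm1 a_proj.
  by rewrite !subr0 subrr.
- rewrite compmB -!mcompA proj_a !comp0m compmB compm1 proj_idem.
  by rewrite subrr subr0.
Qed.

Lemma gram_inverse_dci : is_dual_core_inverse a (star a ;; v ;; a ;; a).
Proof.
have qa : (idm X - p) ;; a = a by rewrite compBm comp1m proj_a subr0.
split.
- exact: star_comp_fixed star_a_v_a3_star_a.
- transitivity (star a ;; v ;; (a ;; a ;; star a ;; v ;; a) ;; a ;; a).
    by rewrite !mcompA.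
  by rewrite a2_star_a_v_a [_ ;; (idm X - p) ;; a]mcompA qa.
- transitivity ((a ;; a ;; star a ;; v ;; a) ;; a); first by rewrite !mcompA.
  by rewrite a2_star_a_v_a qa.
Qed.

End GramInverse.

End InvAddCatTheory.

Unset Implicit Arguments.

Theorem theorem2p4 (C : invAddCat) (X L : Ob C) (phi : Mor C X X)
    (lambda : Mor C X L) :
  is_cokernel phi lambda ->
  ((exists chi : Mor C X X, is_dual_core_inverse phi chi) <->
   (exists (K : Ob C) (kappa : Mor C K X),
      [/\ is_kernel phi kappa,
          invertible (mcomp kappa lambda) &
          invertible (mcomp (mcomp (mcomp phi phi) phi) (star phi)
                      + mcomp lambda (star lambda))]))
  /\
  (forall (chi : Mor C X X) (v : Mor C X X),
     is_dual_core_inverse phi chi ->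
     is_inverse (mcomp (mcomp (mcomp phi phi) phi) (star phi)
                 + mcomp lambda (star lambda)) v ->
     chi = mcomp (mcomp (mcomp (star phi) v) phi) phi).
Proof.
move=> coker; split; first split.
- move=> [chi dci]; have [s [sl sa lsax]] := dci_cokernel_section dci coker.
  exists L, s; split.
  + exact: split_mono_kernel sl sa lsax.
  + by exists (idm L); rewrite /is_inverse compm1 comp1m sl.
  + exact: ex_intro (dci_gram_inverse dci coker.1 sl sa lsax).
- move=> [K [kappa [[ka _] [t [_ tkl]] [v [uv vu]]]]].
  exact: ex_intro (gram_inverse_dci coker ka tkl uv vu).
- by move=> chi v dci [_ vu]; exact: (dci_gram_formula dci coker.1 vu).
Qed.
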